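(* Under the hypotheses of Theorem 7.3 (positive integers $a,d,r,h,n$, $r\geq 2$, $\gcd(a,d)=\gcd(a,r)=1$, $d>hn(r-1)$, $a_0=a$, $a_{k+1}=ha+r^kd$ for $0\leq k\leq n$, $\{a_0,\dots,a_{n+1}\}$ minimally generating $\mathfrak{S}_{n+2}$), every nonzero element $\omega(i)=\ell_iha+id$ ($1\leq i\leq a-1$) of $\mathrm{Ap}(\mathfrak{S}_{n+2},a)$ has a unique expression $\omega(i)=\sum_{k=0}^{n}c_{k+1}a_{k+1}$ with $c_{k+1}\in\mathbb{N}$; namely $(c_1,\dots,c_{n+1})$ is the digit vector of the $r$-adic representation of $i$ up to order $n$.
   Context: The $r$-adic representation of $i$ up to order $n$ is the unique expression $i=\sum_{k=0}^{n}\alpha_kr^k$ with nonnegative integers $\alpha_k$, $0\leq\alpha_k\leq r-1$ for $k\leq n-1$ and $\alpha_n$ unrestricted; $\ell_i=\sum_k\alpha_k$. *)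

From mathcomp Require Import all_boot.
Set Implicit Arguments. Unset Strict Implicit. Unset Printing Implicit Defensive.

Definition in_semigroup (m : nat) (gens : 'I_m -> nat) (x : nat) : Prop :=
  exists c : 'I_m -> nat, x = \sum_(i < m) c i * gens i.

Definition minimal_gens (m : nat) (gens : 'I_m -> nat) : Prop :=
  forall j : 'I_m,
    ~ (exists c : 'I_m -> nat, c j = 0 /\ gens j = \sum_(i < m) c i * gens i).

Definition gens_S (a d r h n : nat) (k : 'I_n.+2) : nat :=
  if val k == 0 then a else h * a + r ^ (val k).-1 * d.
Arguments gens_S : clear implicits.

Definition radic_digit (r n i k : nat) : nat :=
  if k < n then (i %/ r ^ k) %% r else i %/ r ^ n.

Definition ell (r n i : nat) : nat := \sum_(k < n.+1) radic_digit r n i k.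

Definition omega (a d r h n i : nat) : nat := ell r n i * h * a + i * d.

From mathcomp Require Import all_boot.
From mathcomp Require Import zify.

Set Implicit Arguments.
Unset Strict Implicit.
Unset Printing Implicit Defensive.

(* Write a vector c = (c_0, ..., c_n) of coefficients; then
   sum_k c_k (ha + r^k d) = L h a + J d  with  L = sum_k c_k  (its digit sum)
   and  J = sum_k c_k r^k  (its r-adic value).  Hence the equation
   omega(i) = sum_k c_k a_{k+1}  reads  ell_i h a + i d = L h a + J d.
   (1) Reducing modulo a and using gcd(a,d) = 1 gives J = i (mod a).  The
       digit sum of i is at most n(r-1) + i / r^n while L >= J / r^n, so if
       J >= i then ell_i - L <= n(r-1); with hn(r-1) < d this bounds J - i
       by a, hence J = i, and then L = ell_i.
   (2) Among all vectors of r-adic value i, the r-adic digits of i have the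
       smallest digit sum, and they are the only vector reaching it (a carry
       argument, by induction on n). *)

Lemma radic_digitS r n i k :
  radic_digit r n.+1 i k.+1 = radic_digit r n (i %/ r) k.
Proof. by rewrite /radic_digit ltnS !expnS !divnMA. Qed.

Lemma radic_digit0 r n i : radic_digit r n.+1 i 0 = i %% r.
Proof. by rewrite /radic_digit /= expn0 divn1. Qed.

Lemma ellS r n i : ell r n.+1 i = i %% r + ell r n (i %/ r).
Proof.
rewrite /ell big_ord_recl radic_digit0; congr (_ + _).
by apply: eq_bigr => k _; rewrite lift0 radic_digitS.
Qed.

Lemma radic_expansion r n i : \sum_(k < n.+1) radic_digit r n i k * r ^ k = i.
Proof.
elim: n i => [|n IH] i.
  by rewrite big_ord1 /radic_digit /= expn0 divn1 muln1.
rewrite big_ord_recl radic_digit0 expn0 muln1.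
under eq_bigr => k _ do rewrite lift0 radic_digitS expnS mulnCA.
by rewrite -big_distrr /= IH addnC mulnC -divn_eq.
Qed.

Lemma gens_sum_split a d r h n (c : nat -> nat) :
  \sum_(k < n.+1) c k * (h * a + r ^ k * d) =
  (\sum_(k < n.+1) c k) * h * a + (\sum_(k < n.+1) c k * r ^ k) * d.
Proof.
rewrite -mulnA !big_distrl -big_split /=; apply: eq_bigr => k _.
by rewrite mulnDr !mulnA.
Qed.

Section RadicDigits.

Variable r : nat.
Hypothesis r_gt1 : 1 < r.

(* Carrying c_0 / r units from position 0 to position 1 turns a vector of
   r-adic value i into a vector (indexed from position 1) of value i / r. *)
Lemma carry_value n (c : nat -> nat) i :
  \sum_(k < n.+2) c k * r ^ k = i ->
  \sum_(k < n.+1) (c k.+1 + (k == 0 :> nat) * (c 0 %/ r)) * r ^ k = i %/ r.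
Proof.
rewrite big_ord_recl expn0 muln1.
under eq_bigr => k _ do rewrite lift0 expnS mulnCA.
rewrite -big_distrr /= => <-.
under eq_bigr => k _ do rewrite mulnDl.
rewrite big_split /= [X in _ + X]big_ord_recl /= mul1n expn0 muln1.
rewrite [X in _ + (_ + X)]big1 // addn0.
rewrite [c 0 + _]addnC [r * _]mulnC {2}(divn_eq (c 0) r) addnA.
have r_gt0 : 0 < r by apply: ltnW.
by rewrite -mulnDl divnMDl // (divn_small (ltn_pmod _ r_gt0)) addn0.
Qed.

Lemma radic_digits_min n i (c : nat -> nat) :
  \sum_(k < n.+1) c k * r ^ k = i ->
  ell r n i <= \sum_(k < n.+1) c k /\
  (\sum_(k < n.+1) c k = ell r n i ->
     forall k, k < n.+1 -> c k = radic_digit r n i k).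
Proof.
elim: n i c => [|n IH] i c.
  rewrite /ell !big_ord1 expn0 muln1 /radic_digit /= expn0 divn1 => c0_eq.
  by split=> [|_ [|k] //]; rewrite c0_eq.
move=> value_c; set m := c 0 %/ r; pose carried k := c k.+1 + (k == 0) * m.
have [min_carried eq_carried] := IH _ carried (carry_value value_c).
have carried_sum :
    \sum_(k < n.+1) carried k = \sum_(k < n.+1) c k.+1 + m.
  rewrite /carried big_split /=; congr (_ + _).
  by rewrite big_ord_recl /= mul1n big1 ?addn0.
have low_digit : i %% r = c 0 %% r.
  rewrite -value_c big_ord_recl expn0 muln1.
  under eq_bigr => k _ do rewrite lift0 expnS mulnCA.
  by rewrite -big_distrr /= addnC mulnC modnMDl.
have carry_cost : 2 * m <= m * r by rewrite mulnC leq_mul2l r_gt1 orbT.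
have c0_split := divn_eq (c 0) r.
rewrite carried_sum -/m in min_carried eq_carried.
rewrite big_ord_recl ellS.
under eq_bigr => k _ do rewrite lift0.
have -> : c ord0 = c 0 by [].
rewrite -/m /= in c0_split.
set S := \sum_(k < n.+1) c k.+1 in min_carried eq_carried *.
(* c_0 + S = m r + (i mod r) + S >= (i mod r) + (S + m) + m, so carrying
   never increases the digit sum, and strictly decreases it unless m = 0. *)
split; first by lia.
move=> sum_eq; have m0 : m = 0 by lia.
case=> [|k] k_lt; first by rewrite radic_digit0; lia.
rewrite radic_digitS -eq_carried //; first by rewrite /carried m0 muln0 addn0.
by lia.
Qed.

(* The digit sum of i is at most n(r-1) for the bounded digits plus the
   unrestricted top digit i / r^n. *)
Lemma ell_le n i : ell r n i <= n * (r - 1) + i %/ r ^ n.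
Proof.
rewrite /ell big_ord_recr /= {2}/radic_digit ltnn leq_add2r.
rewrite -[n in X in _ <= X * _]card_ord -sum_nat_const; apply: leq_sum => k _.
rewrite /radic_digit /= ltn_ord.
have r_gt0 : 0 < r by apply: ltnW.
by rewrite -ltnS subn1 prednK // ltn_mod.
Qed.

Lemma radic_value_le n (c : nat -> nat) :
  \sum_(k < n.+1) c k * r ^ k <= (\sum_(k < n.+1) c k) * r ^ n.
Proof.
rewrite big_distrl; apply: leq_sum => k _.
by rewrite leq_mul2l leq_pexp2l ?(ltnW r_gt1) ?orbT // -ltnS ltn_ord.
Qed.

Lemma ell_le_excess n i (c : nat -> nat) :
  i <= \sum_(k < n.+1) c k * r ^ k ->
  ell r n i <= n * (r - 1) + \sum_(k < n.+1) c k.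
Proof.
move=> i_le; apply: leq_trans (ell_le n i) _; rewrite leq_add2l.
have rn_gt0 : 0 < r ^ n by rewrite expn_gt0 ltnW.
rewrite -[X in _ <= X](mulnK _ rn_gt0) leq_div2r //.
exact: leq_trans i_le (radic_value_le n c).
Qed.

End RadicDigits.

Lemma mod_cancel_coprime a d x y :
  coprime a d -> x * d = y * d %[mod a] -> x = y %[mod a].
Proof.
move=> cad; wlog yx : x y / y <= x => [hw|].
  by case: (leqP y x) => [/hw // | /ltnW xy /esym/(hw _ _ xy)].
move/eqP; rewrite eqn_mod_dvd ?leq_mul2r ?yx ?orbT // -mulnBl Gauss_dvdl //.
by rewrite -eqn_mod_dvd // => /eqP.
Qed.

Lemma congr_small_eq a x y : x = y %[mod a] -> x < a -> y < x + a -> x = y.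
Proof.
move=> xy xa ya; case: (ltnP y a) => [y_lt_a | a_le_y].
  by rewrite !modn_small in xy.
have : a %| y - x by rewrite -eqn_mod_dvd ?xy // ltnW // (leq_trans xa).
move/dvdn_leq; rewrite subn_gt0 (leq_trans xa a_le_y) => /(_ isT).
by clear xy; lia.
Qed.

Lemma value_forced a d h B i J l L :
  0 < a -> coprime a d -> h * B < d -> i < a ->
  (i <= J -> l <= B + L) ->
  l * h * a + i * d = L * h * a + J * d -> J = i.
Proof.
move=> a_gt0 cad hB ia lL E.
have congr_iJ : i = J %[mod a].
  apply: (mod_cancel_coprime cad).
  by rewrite -(modnMDl (l * h) (i * d)) E modnMDl.
apply: esym; apply: (congr_small_eq congr_iJ ia).
rewrite ltnNge; apply/negP => iaJ.
have iJ : i <= J by apply: leq_trans iaJ; apply: leq_addr.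
have excess : (J - i) * d <= B * h * a.
  have lha : l * h * a <= B * h * a + L * h * a.
    by rewrite -!mulnDl !leq_mul2r (lL iJ) !orbT.
  by rewrite mulnBl; clear congr_iJ; lia.
have big_gap : a * d <= (J - i) * d by rewrite leq_mul2r leq_subRL // iaJ orbT.
have small_gap : B * h * a < a * d by rewrite mulnC ltn_pmul2l // mulnC.
by clear congr_iJ; lia.
Qed.

Theorem lemma7p4 (a d r h n : nat) :
  0 < a -> 0 < d -> 0 < h -> 0 < n -> 2 <= r ->
  coprime a d -> coprime a r -> h * n * (r - 1) < d ->
  minimal_gens (gens_S a d r h n) ->
  forall i : nat, 1 <= i <= a - 1 ->
  forall c : 'I_n.+1 -> nat,
    omega a d r h n i = \sum_(k < n.+1) c k * (h * a + r ^ k * d) <->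
    (forall k : 'I_n.+1, c k = radic_digit r n i k).
Proof.
move=> a_gt0 _ h_gt0 _ r_gt1 cad _ hd _ i /andP[_ i_le] c.
have i_lt_a : i < a by rewrite -(prednK a_gt0) ltnS -subn1.
(* view the coefficient vector as a sequence, to apply the digit lemmas *)
pose cs k := c (inord k).
have c_cs (k : 'I_n.+1) : c k = cs k by rewrite /cs inord_val.
rewrite (eq_bigr (fun k : 'I_n.+1 => cs k * (h * a + r ^ k * d))); last first.
  by move=> k _; rewrite c_cs.
rewrite gens_sum_split /omega.
split=> [E | c_digits].
- have value_i : \sum_(k < n.+1) cs k * r ^ k = i.
    apply: (value_forced (B := n * (r - 1)) a_gt0 cad _ i_lt_a _ E);
      [by rewrite mulnA | exact: ell_le_excess].
  have sum_ell : \sum_(k < n.+1) cs k = ell r n i.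
    move: E; rewrite value_i => /addIn /eqP.
    by rewrite -!mulnA eqn_pmul2r ?muln_gt0 ?h_gt0 // => /eqP.
  have [_ cs_digits] := radic_digits_min r_gt1 value_i.
  by move=> k; rewrite c_cs cs_digits.
- have cs_digits (k : 'I_n.+1) : cs k = radic_digit r n i k by rewrite -c_cs c_digits.
  have sum_ell : \sum_(k < n.+1) cs k = ell r n i by apply: eq_bigr.
  have value_i : \sum_(k < n.+1) cs k * r ^ k = i.
    by rewrite -[RHS](radic_expansion r n i); apply: eq_bigr => k _; rewrite cs_digits.
  by rewrite sum_ell value_i.
Qed.
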